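(* Let $L\ge1$, $d,k,m$ be positive integers with $m>\max\{d,k\}$, set $a_0=d$, $a_L=k$, $a_\ell=m$ for $1\le\ell\le L-1$, and let $\mathbf W^\ell\in\mathbb R^{a_\ell\times a_{\ell-1}}$ for $\ell=1,\dots,L$. Let $\boldsymbol\Sigma\in\mathbb R^{d\times d}$ be symmetric positive definite and define $$\widehat{\mathbf G}_O=\sum_{\ell=1}^L\big(\mathbf W^{L:\ell+1}\mathbf W^{\ell+1:L}\big)\otimes\big(\boldsymbol\Sigma^{1/2}\mathbf W^{1:\ell-1}\mathbf W^{\ell-1:1}\boldsymbol\Sigma^{1/2}\big)\in\mathbb R^{kd\times kd}.$$ Assume $\alpha_\ell:=\sigma_{\min}^2(\mathbf W^{L:\ell+1})\,\sigma_{\min}^2(\mathbf W^{1:\ell-1})>0$ for all $\ell=1,\dots,L$, and let $\gamma_\ell=\alpha_\ell/\sum_{i=1}^L\alpha_i$. Then $\widehat{\mathbf G}_O$ is positive definite and $$\kappa(\widehat{\mathbf G}_O)\le\kappa(\boldsymbol\Sigma)\sum_{\ell=1}^L\gamma_\ell\,\kappa(\mathbf W^{L:\ell+1})^2\,\kappa(\mathbf W^{1:\ell-1})^2\le\kappa(\boldsymbol\Sigma)\max_{1\le\ell\le L}\Big\{\kappa(\mathbf W^{L:\ell+1})^2\,\kappa(\mathbf W^{1:\ell-1})^2\Big\}.$$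
   Context: Notation: for $i>j$, $\mathbf W^{i:j}=\mathbf W^i\mathbf W^{i-1}\cdots\mathbf W^j$; for $i<j$, $\mathbf W^{i:j}=(\mathbf W^i)^\top(\mathbf W^{i+1})^\top\cdots(\mathbf W^j)^\top$ (so $\mathbf W^{\ell+1:L}=(\mathbf W^{L:\ell+1})^\top$ and $\mathbf W^{1:\ell-1}=(\mathbf W^{\ell-1:1})^\top$). Empty products are identities: $\mathbf W^{L:L+1}=\mathbf W^{L+1:L}=\mathbf I_k$ and $\mathbf W^{1:0}=\mathbf W^{0:1}=\mathbf I_d$. $\widehat{\mathbf G}_O$ has the same nonzero eigenvalues as the Gauss–Newton matrix of the linear network $F(\mathbf x)=\mathbf W^L\cdots\mathbf W^1\mathbf x$ with input covariance $\boldsymbol\Sigma$. $\boldsymbol\Sigma^{1/2}$ is the positive semidefinite square root, $\otimes$ the Kronecker product. For a symmetric positive definite matrix $\mathbf A$, $\kappa(\mathbf A)=\lambda_{\max}(\mathbf A)/\lambda_{\min}(\mathbf A)$. For a rectangular $\mathbf A\in\mathbb R^{p\times q}$, $\sigma_{\max}(\mathbf A)$ is its largest singular value, $\sigma_{\min}(\mathbf A)$ its $\min(p,q)$-th largest singular value, and $\kappa(\mathbf A)=\sigma_{\max}(\mathbf A)/\sigma_{\min}(\mathbf A)$ (for identity matrices, $\kappa=1$, $\sigma_{\min}=1$). *)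

From HB Require Import structures.
From mathcomp Require Import all_boot all_order all_algebra.
From mathcomp Require Import polyrcf mxtens.
From Stdlib Require Import ClassicalEpsilon.
Set Implicit Arguments. Unset Strict Implicit. Unset Printing Implicit Defensive.
Import Order.TTheory GRing.Theory Num.Theory.
Local Open Scope ring_scope.

Section Defs.
Variable R : rcfType.

Definition posdefmx n (A : 'M[R]_n) : Prop :=
  A^T = A /\ forall v : 'rV[R]_n, v != 0 -> 0 < (v *m A *m v^T) 0 0.
Definition psdmx n (A : 'M[R]_n) : Prop :=
  A^T = A /\ forall v : 'rV[R]_n, 0 <= (v *m A *m v^T) 0 0.

(* real eigenvalues (roots of the characteristic polynomial; for a symmetric
   matrix these are all its eigenvalues) *)
Definition eigs n (A : 'M[R]_n) : seq R := rootsR (char_poly A).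
Definition lambda_max n (A : 'M[R]_n) : R :=
  \big[Num.max/head 0 (eigs A)]_(x <- eigs A) x.
Definition lambda_min n (A : 'M[R]_n) : R :=
  \big[Num.min/head 0 (eigs A)]_(x <- eigs A) x.
Definition kappa_sym n (A : 'M[R]_n) : R := lambda_max A / lambda_min A.

(* singular values of a rectangular p x q matrix: the min(p,q) singular values
   are the square roots of the eigenvalues of the smaller Gram matrix *)
Definition sigma_max p q (A : 'M[R]_(p, q)) : R :=
  if (p <= q)%N then Num.sqrt (lambda_max (A *m A^T))
  else Num.sqrt (lambda_max (A^T *m A)).
Definition sigma_min p q (A : 'M[R]_(p, q)) : R :=
  if (p <= q)%N then Num.sqrt (lambda_min (A *m A^T))
  else Num.sqrt (lambda_min (A^T *m A)).
Definition kappa_mx p q (A : 'M[R]_(p, q)) : R := sigma_max A / sigma_min A.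

Definition sqrt_psd n (A : 'M[R]_n) : 'M[R]_n :=
  epsilon (inhabits 0) (fun S => psdmx S /\ S *m S = A).

Definition width (d k m L j : nat) : nat :=
  if j == 0%N then d else if j == L then k else m.

Variables (d k m L : nat).
Local Notation a := (width d k m L).
(* W l is the weight matrix W^{l+1} : a_{l+1} x a_l  (0-based index) *)
Variable W : forall l : nat, 'M[R]_(a l.+1, a l).

(* W^{g+i : i+1} = W^{g+i} ... W^{i+1}  (1-based), of size a_{g+i} x a_i *)
Fixpoint prodW (i g : nat) : 'M[R]_(a (g + i), a i) :=
  match g with
  | 0 => 1%:M
  | g'.+1 => W (g' + i) *m prodW i g'
  end.

(* W^{j:1} = W^j ... W^1, of size a_j x d *)
Fixpoint prodBot (j : nat) : 'M[R]_(a j, a 0) :=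
  match j with
  | 0 => 1%:M
  | j'.+1 => W j' *m prodBot j'
  end.

Lemma width_top (l : 'I_L) : a ((L - l.+1) + l.+1) = k.
Proof.
rewrite subnK ?ltn_ord // /width; case: L l => [[]//|L' l] /=; by rewrite eqxx.
Qed.

(* for l : 'I_L, with ell = l+1 the paper's index:
   Wtop l = W^{L:ell+1} (k x a_ell), Wbot l = W^{ell-1:1} (a_{ell-1} x d) *)
Definition Wtop (l : 'I_L) : 'M[R]_(k, a l.+1) :=
  castmx (width_top l, erefl) (prodW l.+1 (L - l.+1)).
Definition Wbot (l : 'I_L) : 'M[R]_(a l, d) := prodBot l.

Definition GO (Sigma : 'M[R]_d) : 'M[R]_(k * d) :=
  \sum_(l < L) ((Wtop l *m (Wtop l)^T) *t
     (sqrt_psd Sigma *m ((Wbot l)^T *m Wbot l) *m sqrt_psd Sigma)).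

Definition alpha (l : 'I_L) : R :=
  sigma_min (Wtop l) ^+ 2 * sigma_min (Wbot l)^T ^+ 2.
End Defs.

From HB Require Import structures.
From mathcomp Require Import all_boot all_order all_algebra.
From mathcomp Require Import polyrcf mxtens complex ring.
From Stdlib Require Import ClassicalEpsilon.
Import Order.TTheory GRing.Theory Num.Theory.
Local Open Scope ring_scope.
Set Implicit Arguments. Unset Strict Implicit. Unset Printing Implicit Defensive.

(* With A_l = W^{L:l+1} (W^{L:l+1})^T and C_l = (W^{l-1:1})^T W^{l-1:1}, the
   matrix G is the sum of the Kronecker products A_l (x) S C_l S, S = Sigma^{1/2}.
   The Rayleigh quotient of a Kronecker product of positive semidefinite
   matrices lies between the products of their extreme eigenvalues, and that
   of S C_l S between lambda_min(C_l) lambda_min(Sigma) and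
   lambda_max(C_l) lambda_max(Sigma).  Summing over l,
     lambda_min(G) >= lambda_min(Sigma) sum_l alpha_l   and
     lambda_max(G) <= lambda_max(Sigma) sum_l alpha_l c_l,
   because alpha_l = lambda_min(A_l) lambda_min(C_l) and
   alpha_l c_l = lambda_max(A_l) lambda_max(C_l) with c_l the squared condition
   numbers.  Dividing gives the first bound; the second says that a weighted
   mean is at most the maximum.  Over a real closed field, the spectral
   theorem for symmetric matrices follows from the complexification (a
   symmetric matrix has a real eigenvalue) and deflation by Householder
   reflections. *)

Section QuadraticForms.
Variable R : rcfType.

Definition sqnorm n (v : 'rV[R]_n) : R := (v *m v^T) 0 0.
Definition qform n (A : 'M[R]_n) (v : 'rV[R]_n) : R := (v *m A *m v^T) 0 0.

Lemma sqnormE n (v : 'rV[R]_n) : sqnorm v = \sum_i v 0 i ^+ 2.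
Proof. by rewrite /sqnorm mxE; apply: eq_bigr => i _; rewrite mxE expr2. Qed.

Lemma sqnorm_ge0 n (v : 'rV[R]_n) : 0 <= sqnorm v.
Proof. by rewrite sqnormE sumr_ge0 // => i _; rewrite sqr_ge0. Qed.

Lemma sqnorm_eq0 n (v : 'rV[R]_n) : (sqnorm v == 0) = (v == 0).
Proof.
apply/idP/idP; last by move/eqP->; rewrite /sqnorm mul0mx mxE.
rewrite sqnormE psumr_eq0 => [/allP v0|i _]; last by rewrite sqr_ge0.
apply/eqP/rowP => i; rewrite mxE.
by have /(_ (mem_index_enum i)) := v0 i; rewrite /= sqrf_eq0 => /eqP.
Qed.

Lemma sqnorm_gt0 n (v : 'rV[R]_n) : v != 0 -> 0 < sqnorm v.
Proof. by move=> v0; rewrite lt_def sqnorm_ge0 sqnorm_eq0 v0. Qed.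

Lemma sqnormZ n (c : R) (v : 'rV[R]_n) : sqnorm (c *: v) = c ^+ 2 * sqnorm v.
Proof. by rewrite /sqnorm linearZ /= -scalemxAl -scalemxAr scalerA !mxE expr2. Qed.

Lemma sym_form_swap n (M : 'M[R]_n) (u w : 'rV[R]_n) : M^T = M ->
  (u *m M *m w^T) 0 0 = (w *m M *m u^T) 0 0.
Proof.
move=> sM; transitivity ((u *m M *m w^T)^T 0 0); first by rewrite [RHS]mxE.
by rewrite !trmx_mul trmxK sM mulmxA.
Qed.

Lemma qform_sum n I (r : seq I) (P : pred I) (F : I -> 'M[R]_n) v :
  qform (\sum_(i <- r | P i) F i) v = \sum_(i <- r | P i) qform (F i) v.
Proof. by rewrite /qform mulmx_sumr mulmx_suml summxE. Qed.

Lemma qform_gram n p (M : 'M[R]_(n, p)) v : qform (M *m M^T) v = sqnorm (v *m M).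
Proof. by rewrite /qform /sqnorm trmx_mul !mulmxA. Qed.

Lemma qform_sandwich n (S C : 'M[R]_n) v : S^T = S ->
  qform (S *m C *m S) v = qform C (v *m S).
Proof. by move=> sS; rewrite /qform trmx_mul sS !mulmxA. Qed.

Lemma sqnorm_mul_sqrt n (S A : 'M[R]_n) v : S^T = S -> S *m S = A ->
  sqnorm (v *m S) = qform A v.
Proof. by move=> sS <-; rewrite /sqnorm /qform trmx_mul sS !mulmxA. Qed.

Lemma qform_orthogonal_conj n (Q M : 'M[R]_n) v : Q *m Q^T = 1%:M ->
  qform (Q^T *m M *m Q) v = qform M (v *m Q^T) /\ sqnorm (v *m Q^T) = sqnorm v.
Proof.
move=> /mulmx1C QTQ; rewrite /qform /sqnorm !trmx_mul !trmxK.
split; first by rewrite !mulmxA.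
by rewrite -(mulmxA v) (mulmxA Q^T) QTQ mul1mx.
Qed.

Lemma qform_diag_bounds n (M : 'M[R]_n) (lo hi : R) v :
  (forall i j, i != j -> M i j = 0) -> (forall i, lo <= M i i <= hi) ->
  lo * sqnorm v <= qform M v <= hi * sqnorm v.
Proof.
move=> Mdiag Mbound; have -> : qform M v = \sum_j M j j * v 0 j ^+ 2.
  rewrite /qform mxE; apply: eq_bigr => j _; rewrite !mxE.
  rewrite (bigD1 j) //= big1 ?addr0 => [|i /Mdiag ->]; last by rewrite mulr0.
  by rewrite expr2 mulrA [v 0 j * _]mulrC.
rewrite sqnormE !mulr_sumr; apply/andP; split; apply: ler_sum => i _;
  by apply: ler_wpM2r; [exact: sqr_ge0 | case/andP: (Mbound i)].
Qed.

Lemma qform_orthodiag_bounds n (Q M : 'M[R]_n) (lo hi : R) v : Q *m Q^T = 1%:M ->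
  (forall i j, i != j -> M i j = 0) -> (forall i, lo <= M i i <= hi) ->
  lo * sqnorm v <= qform (Q^T *m M *m Q) v <= hi * sqnorm v.
Proof.
move=> QQT Mdiag Mbound; have [-> <-] := qform_orthogonal_conj M v QQT.
exact: qform_diag_bounds.
Qed.

End QuadraticForms.

Section RealEigenvalue.
Variable R : rcfType.

Lemma ReM (z w : R[i]) :
  complex.Re (z * w) = complex.Re z * complex.Re w - complex.Im z * complex.Im w.
Proof. by case: z w => [a b] [c d]. Qed.

Lemma ImM (z w : R[i]) :
  complex.Im (z * w) = complex.Im z * complex.Re w + complex.Re z * complex.Im w.
Proof. by case: z w => [a b] [c d] /=; rewrite addrC. Qed.

(* A complex eigenvector x + i y with eigenvalue a + i b gives
   x A = a x - b y and y A = b x + a y; symmetry of A then forces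
   b (|x|^2 + |y|^2) = 0. *)
Lemma sym_eigenvalue_real n (A : 'M[R]_n.+1) : A^T = A -> exists a, eigenvalue A a.
Proof.
move=> sA; pose Ac := map_mx (real_complex R) A.
have : size (char_poly Ac) != 1%N by rewrite size_char_poly.
case/closed_rootP => z; rewrite -eigenvalue_root_char => /eigenvalueP [v Hv v0].
pose x := map_mx (@complex.Re R) v; pose y := map_mx (@complex.Im R) v.
pose a := complex.Re z; pose b := complex.Im z.
have Re_sum := raddf_sum (@complex.Re R : Rcomplex R -> R).
have Im_sum := raddf_sum (@complex.Im R : Rcomplex R -> R).
have Hx : x *m A = a *: x - b *: y.
  apply/rowP => j; move/rowP: Hv => /(_ j); rewrite !mxE.
  move/(congr1 (@complex.Re R)); rewrite ReM Re_sum => <-.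
  by apply: eq_bigr => i _; rewrite !mxE; case: (v 0 i) => p q /=; rewrite mulr0 subr0.
have Hy : y *m A = b *: x + a *: y.
  apply/rowP => j; move/rowP: Hv => /(_ j); rewrite !mxE.
  move/(congr1 (@complex.Im R)); rewrite ImM Im_sum => <-.
  by apply: eq_bigr => i _; rewrite !mxE; case: (v 0 i) => p q /=; rewrite mulr0 add0r.
have xy0 : (x != 0) || (y != 0).
  apply: contraNT v0; rewrite negb_or !negbK => /andP[/eqP x0 /eqP y0].
  apply/eqP/rowP => i; move/rowP: x0 => /(_ i); move/rowP: y0 => /(_ i).
  by rewrite !mxE; case: (v 0 i) => c d /= -> ->.
have norm_gt0 : 0 < sqnorm x + sqnorm y.
  case/orP: xy0 => /sqnorm_gt0 ?; first exact: ltr_wpDr (sqnorm_ge0 y) _.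
  exact: ltr_wpDl (sqnorm_ge0 x) _.
have b0 : b = 0.
  have xyT : (x *m y^T) 0 0 = (y *m x^T) 0 0.
    by have := sym_form_swap x y (@trmx1 R _); rewrite !mulmx1.
  have := sym_form_swap x y sA; rewrite -!trace_mx11 Hx Hy mulmxBl mulmxDl.
  rewrite -!scalemxAl linearB linearD !linearZ /= !trace_mx11.
  rewrite xyT -/(sqnorm x) -/(sqnorm y) => /eqP; rewrite -subr_eq0.
  have -> : a * (y *m x^T) 0 0 - b * sqnorm y - (b * sqnorm x + a * (y *m x^T) 0 0)
          = - (b * (sqnorm x + sqnorm y)) by ring.
  by rewrite oppr_eq0 mulf_eq0 (gt_eqF norm_gt0) orbF => /eqP.
rewrite b0 scale0r subr0 in Hx; rewrite b0 scale0r add0r in Hy.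
by exists a; apply/eigenvalueP; case/orP: xy0; [exists x | exists y].
Qed.

End RealEigenvalue.

Section Spectral.
Variable R : rcfType.

Definition reflectmx n (w : 'rV[R]_n) : 'M[R]_n :=
  1%:M - (2 / sqnorm w) *: (w^T *m w).

Lemma reflectmx_sym n (w : 'rV[R]_n) : (reflectmx w)^T = reflectmx w.
Proof. by rewrite /reflectmx linearB /= linearZ /= trmx1 trmx_mul trmxK. Qed.

Lemma reflectmx_orthogonal n (w : 'rV[R]_n) : w != 0 ->
  reflectmx w *m (reflectmx w)^T = 1%:M.
Proof.
move=> w0; have s0 : sqnorm w != 0 by rewrite sqnorm_eq0.
have wwT : w *m w^T = (sqnorm w)%:M by rewrite [LHS]mx11_scalar.
rewrite reflectmx_sym /reflectmx mulmxBl !mulmxBr mul1mx mulmx1 -!scalemxAl.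
rewrite -!scalemxAr mul1mx mulmxA -(mulmxA w^T) wwT mul_mx_scalar -scalemxAl !scalerA.
have -> : 2 / sqnorm w * (2 / sqnorm w * sqnorm w) = 2 / sqnorm w + 2 / sqnorm w.
  by field.
by rewrite scalerDl opprB addrK subrK.
Qed.

Lemma reflectmx_swap n (e u : 'rV[R]_n) : sqnorm u = sqnorm e -> u != e ->
  e *m reflectmx (e - u) = u.
Proof.
move=> ue uNe; have euT := sym_form_swap e u (@trmx1 R n); rewrite !mulmx1 in euT.
have ewT : (e *m (e - u)^T) 0 0 = sqnorm e - (e *m u^T) 0 0.
  by rewrite -!trace_mx11 linearB /= mulmxBr linearB /= !trace_mx11.
have sw : sqnorm (e - u) = 2 * (sqnorm e - (e *m u^T) 0 0).
  rewrite /sqnorm -!trace_mx11 linearB /= mulmxBl !mulmxBr !linearB /= !trace_mx11.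
  by rewrite -/(sqnorm e) -/(sqnorm u) euT ue; ring.
have sw0 : sqnorm (e - u) != 0 by rewrite sqnorm_eq0 subr_eq0 eq_sym.
rewrite /reflectmx mulmxBr mulmx1 -scalemxAr mulmxA [e *m _]mx11_scalar ewT.
rewrite mul_scalar_mx scalerA.
have -> : 2 / sqnorm (e - u) * (sqnorm e - (e *m u^T) 0 0) = 1.
  by rewrite sw; field; apply: contraNneq sw0 => d0; rewrite sw d0 mulr0.
by rewrite scale1r opprB addrC subrK.
Qed.

Lemma orthogonal_row0 n (u : 'rV[R]_n.+1) : sqnorm u = 1 ->
  exists H : 'M[R]_n.+1, H *m H^T = 1%:M /\ row 0 H = u.
Proof.
move=> u1; pose e : 'rV[R]_n.+1 := 'e_0.
have e1 : sqnorm e = 1 by rewrite /sqnorm mxE (bigD1 0) //= big1 => [|i /negbTE i0];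
  rewrite !mxE ?eqxx ?i0 ?mul0r ?mulr1 ?addr0.
have [-> | uNe] := eqVneq u e.
  by exists 1%:M; rewrite trmx1 mulmx1 row1.
exists (reflectmx (e - u)); split; first by rewrite reflectmx_orthogonal // subr_eq0 eq_sym.
by rewrite rowE reflectmx_swap // u1 e1.
Qed.

Definition orthodiag n (A Q : 'M[R]_n) (D : 'rV[R]_n) :=
  Q *m Q^T = 1%:M /\ A = Q^T *m diag_mx D *m Q.

Lemma orthodiag_conj n (A H Q : 'M[R]_n) D : H *m H^T = 1%:M ->
  orthodiag (H *m A *m H^T) Q D -> orthodiag A (Q *m H) D.
Proof.
move=> HHT [QQT EA]; have HTH := mulmx1C HHT; split.
  by rewrite trmx_mul mulmxA -(mulmxA Q) HHT mulmx1.
rewrite trmx_mul -[H^T *m _ *m _ *m _]/(H^T *m Q^T *m diag_mx D *m (Q *m H)).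
have -> : H^T *m Q^T *m diag_mx D *m (Q *m H) = H^T *m (Q^T *m diag_mx D *m Q) *m H.
  by rewrite !mulmxA.
by rewrite -EA !mulmxA HTH mul1mx -mulmxA HTH mulmx1.
Qed.

Lemma orthodiag_block n a (A : 'M[R]_n) Q D : orthodiag A Q D ->
  orthodiag (block_mx a%:M 0 0 A) (block_mx 1%:M 0 0 Q) (row_mx (a%:M : 'rV_1) D).
Proof.
move=> [QQT EA]; split; rewrite tr_block_mx !trmx0 trmx1.
  by rewrite mulmx_block !mulmx0 !mul0mx !mulmx1 !addr0 !add0r QQT -scalar_mx_block.
have -> : diag_mx (row_mx (a%:M : 'rV_1) D) = block_mx a%:M 0 0 (diag_mx D).
  by rewrite diag_mx_row; congr block_mx; apply/matrixP => i j; rewrite !ord1 !mxE.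
by rewrite !mulmx_block !mulmx0 !mul0mx !mulmx1 !mul1mx !addr0 !add0r mul0mx -EA.
Qed.

Lemma sym_deflate n (B : 'M[R]_(1 + n)) a : B^T = B -> row 0 B = a *: 'e_0 ->
  B = block_mx a%:M 0 0 (drsubmx B).
Proof.
move=> sB rowB; have B0 j : B 0 j = a * (j == 0)%:R.
  by move/rowP: rowB => /(_ j); rewrite !mxE.
have l0 : lshift n (0 : 'I_1) = 0 by apply: val_inj.
have ur : ursubmx B = 0.
  by apply/matrixP => i j; rewrite !ord1 !mxE l0 B0 mulr_natr.
have ul : ulsubmx B = a%:M.
  by apply/matrixP => i j; rewrite !ord1 !mxE l0 B0 eqxx mulr1.
have dl : dlsubmx B = 0 by rewrite -sB -trmx_ursub ur trmx0.
by rewrite -ul -ur -dl submxK.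
Qed.

(* An orthogonal matrix whose first row is a unit eigenvector for a conjugates
   A to diag(a, A'), and A' is diagonalised by induction. *)
Theorem sym_orthodiag n (A : 'M[R]_n) : A^T = A -> exists Q D, orthodiag A Q D.
Proof.
elim: n A => [|n IH] A sA.
  by exists 1%:M, 0; split; [rewrite trmx1 mulmx1 | apply/matrixP => -[]].
have [a /eigenvalueP [v Hv v0]] := sym_eigenvalue_real sA.
pose u := (Num.sqrt (sqnorm v))^-1 *: v.
have u1 : sqnorm u = 1.
  by rewrite sqnormZ exprVn sqr_sqrtr ?sqnorm_ge0 // mulVf // sqnorm_eq0.
have [H [HHT Hrow]] := orthogonal_row0 u1.
pose B : 'M[R]_(1 + n) := H *m A *m H^T.
have sB : B^T = B by rewrite /B !trmx_mul trmxK sA mulmxA.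
have uA : u *m A = a *: u by rewrite -scalemxAl Hv !scalerA mulrC.
have rowB : row 0 B = a *: 'e_0.
  by rewrite /B !row_mul Hrow uA -scalemxAl -Hrow -row_mul HHT row1.
have [Q [D dB]] : exists Q D, orthodiag (drsubmx B) Q D by apply/IH; rewrite trmx_drsub sB.
exists (block_mx 1%:M 0 0 Q *m (H : 'M_(1 + n))), (row_mx (a%:M : 'rV_1) D).
apply: orthodiag_conj HHT _; rewrite -/B {1}(sym_deflate sB rowB).
exact: orthodiag_block.
Qed.

End Spectral.

Section ExtremeEigenvalues.
Variable R : rcfType.

Lemma mem_eigs n (A : 'M[R]_n) x : (x \in eigs A) = eigenvalue A x.
Proof.
rewrite eigenvalue_root_char -(roots_on_rootsR (monic_neq0 (char_poly_monic A))).
by rewrite in_itv.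
Qed.

Lemma orthodiag_eigs n (A Q : 'M[R]_n) D i : orthodiag A Q D -> D 0 i \in eigs A.
Proof.
move=> [QQT EA]; rewrite mem_eigs; apply/eigenvalueP; exists (row i Q).
  by rewrite EA !mulmxA -row_mul QQT row1 -rowE row_diag_mx -scalemxAl -rowE.
apply: contraTneq isT => Qi0.
have := congr1 (row i) QQT; rewrite row_mul Qi0 mul0mx row1 => /rowP /(_ i).
by rewrite !mxE !eqxx /= => /eqP; rewrite eq_sym oner_eq0.
Qed.

Lemma eigs_sym_neq0 n (A : 'M[R]_n) : (0 < n)%N -> A^T = A -> eigs A != [::].
Proof.
case: n A => // n A _ /sym_orthodiag [Q [D /(orthodiag_eigs 0)]].
by case: (eigs A).
Qed.

Lemma lambda_max_ub n (A : 'M[R]_n) x : x \in eigs A -> x <= lambda_max A.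
Proof. by move=> xA; apply: (le_bigmax_seq _ _ xpredT id xA). Qed.

Lemma lambda_min_lb n (A : 'M[R]_n) x : x \in eigs A -> lambda_min A <= x.
Proof. by move=> xA; apply: (ge_bigmin_seq _ _ xpredT id xA). Qed.

Lemma lambda_max_mem n (A : 'M[R]_n) : (0 < n)%N -> A^T = A -> lambda_max A \in eigs A.
Proof.
move=> /eigs_sym_neq0 /[apply]; rewrite /lambda_max big_seq; case: (eigs A) => [//|x s] _.
apply: (big_ind (fun y => is_true (y \in x :: s))) => //; first exact: mem_head.
by move=> y z yA zA; rewrite maxEle; case: ifP.
Qed.

Lemma lambda_min_mem n (A : 'M[R]_n) : (0 < n)%N -> A^T = A -> lambda_min A \in eigs A.
Proof.
move=> /eigs_sym_neq0 /[apply]; rewrite /lambda_min big_seq; case: (eigs A) => [//|x s] _.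
apply: (big_ind (fun y => is_true (y \in x :: s))) => //; first exact: mem_head.
by move=> y z yA zA; rewrite minEle; case: ifP.
Qed.

Lemma rayleigh_bounds n (A : 'M[R]_n) v : A^T = A ->
  lambda_min A * sqnorm v <= qform A v <= lambda_max A * sqnorm v.
Proof.
move=> /sym_orthodiag [Q [D dA]]; have [QQT EA] := dA; rewrite EA.
apply: qform_orthodiag_bounds => // [i j ij|i]; first by rewrite mxE (negbTE ij) mulr0n.
rewrite mxE eqxx mulr1n -EA.
by rewrite lambda_min_lb ?lambda_max_ub ?(orthodiag_eigs _ dA).
Qed.

Lemma eigs_qform n (A : 'M[R]_n) x : x \in eigs A ->
  exists2 v, v != 0 & qform A v = x * sqnorm v.
Proof.
rewrite mem_eigs => /eigenvalueP [v Av v0].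
by exists v => //; rewrite /qform Av -scalemxAl mxE.
Qed.

Lemma lambda_min_ge n (A : 'M[R]_n) c : (0 < n)%N -> A^T = A ->
  (forall v, c * sqnorm v <= qform A v) -> c <= lambda_min A.
Proof.
move=> n0 sA Ac; have [v v0 Av] := eigs_qform (lambda_min_mem n0 sA).
by have := Ac v; rewrite Av ler_pM2r // sqnorm_gt0.
Qed.

Lemma lambda_max_le n (A : 'M[R]_n) c : (0 < n)%N -> A^T = A ->
  (forall v, qform A v <= c * sqnorm v) -> lambda_max A <= c.
Proof.
move=> n0 sA Ac; have [v v0 Av] := eigs_qform (lambda_max_mem n0 sA).
by have := Ac v; rewrite Av ler_pM2r // sqnorm_gt0.
Qed.

Lemma lambda_min_le_max n (A : 'M[R]_n) : (0 < n)%N -> A^T = A ->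
  lambda_min A <= lambda_max A.
Proof. by move=> n0 sA; apply/lambda_max_ub/lambda_min_mem. Qed.

Lemma lambda_min_gt0 n (A : 'M[R]_n) : (0 < n)%N -> posdefmx A -> 0 < lambda_min A.
Proof.
move=> n0 [sA Apos]; have [v v0 Av] := eigs_qform (lambda_min_mem n0 sA).
by have := Apos v v0; rewrite -/(qform A v) Av pmulr_lgt0 // sqnorm_gt0.
Qed.

Lemma lambda_min_gram_ge0 n p (M : 'M[R]_(n, p)) : (0 < n)%N ->
  0 <= lambda_min (M *m M^T).
Proof.
move=> n0; apply: lambda_min_ge => // [|v]; first by rewrite trmx_mul trmxK.
by rewrite mul0r qform_gram sqnorm_ge0.
Qed.

Lemma posdefmx_psd n (A : 'M[R]_n) : posdefmx A -> psdmx A.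
Proof.
move=> [sA Apos]; split => // v; have [->|v0] := eqVneq v 0; last exact/ltW/Apos.
by rewrite !mul0mx mxE.
Qed.

Lemma posdefmx_lambda_min n (A : 'M[R]_n) :
  A^T = A -> 0 < lambda_min A -> posdefmx A.
Proof.
move=> sA lA; split => // v v0; have /andP[lo _] := rayleigh_bounds v sA.
by apply: lt_le_trans lo; rewrite mulr_gt0 // sqnorm_gt0.
Qed.

End ExtremeEigenvalues.

Section EigenvalueBounds.
Variable R : rcfType.

Lemma lambda_bounds_of_qform n (A : 'M[R]_n) lo hi : (0 < n)%N -> A^T = A ->
  (forall v, lo * sqnorm v <= qform A v <= hi * sqnorm v) ->
  lo <= lambda_min A /\ lambda_max A <= hi.
Proof.
move=> n0 sA Abd; split; [apply: lambda_min_ge | apply: lambda_max_le] => // v;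
  by case/andP: (Abd v).
Qed.

Lemma tensmx11 m n : (1%:M : 'M[R]_m) *t (1%:M : 'M[R]_n) = 1%:M.
Proof.
apply/matrixP => i j; case: (mxtens_indexP i) => i1 i2; case: (mxtens_indexP j) => j1 j2.
rewrite tensmxE !mxE (inj_eq (can_inj (@mxtens_indexK _ _))) xpair_eqE.
by case: (i1 == j1); case: (i2 == j2); rewrite ?mulr1 ?mul0r ?mulr0.
Qed.

(* P *t Q diagonalises A *t B, with the products of eigenvalues of A and B
   on the diagonal. *)
Lemma qform_tens_bounds m n (A : 'M[R]_m) (B : 'M[R]_n) v :
  A^T = A -> B^T = B -> 0 <= lambda_min A -> 0 <= lambda_min B ->
  lambda_min A * lambda_min B * sqnorm v <= qform (A *t B) v
    <= lambda_max A * lambda_max B * sqnorm v.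
Proof.
move=> /sym_orthodiag [P [a dA]] /sym_orthodiag [Q [b dB]] A0 B0.
have [PPT EA] := dA; have [QQT EB] := dB.
have -> : A *t B = (P *t Q)^T *m (diag_mx a *t diag_mx b) *m (P *t Q).
  by rewrite trmx_tens !tensmx_mul -EA -EB.
apply: qform_orthodiag_bounds; first by rewrite trmx_tens tensmx_mul PPT QQT tensmx11.
  move=> i j; case: (mxtens_indexP i) => i1 i2; case: (mxtens_indexP j) => j1 j2.
  rewrite (inj_eq (can_inj (@mxtens_indexK _ _))) xpair_eqE negb_and tensmxE !mxE.
  by case/orP => /negbTE ->; rewrite ?mulr0n ?mul0r ?mulr0.
move=> i; case: (mxtens_indexP i) => i1 i2; rewrite tensmxE !mxE !eqxx !mulr1n.
have ai := orthodiag_eigs i1 dA; have bi := orthodiag_eigs i2 dB.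
by rewrite !ler_pM ?lambda_min_lb ?lambda_max_ub //;
  [exact: le_trans A0 (lambda_min_lb ai) | exact: le_trans B0 (lambda_min_lb bi)].
Qed.

Lemma tens_sum_sym (I : finType) m n (A : I -> 'M[R]_m) (B : I -> 'M[R]_n) :
  (forall i, (A i)^T = A i) -> (forall i, (B i)^T = B i) ->
  (\sum_i A i *t B i)^T = \sum_i A i *t B i.
Proof.
by move=> sA sB; rewrite linear_sum; apply: eq_bigr => i _; rewrite /= trmx_tens sA sB.
Qed.

Lemma tens_sum_lambda_bounds (I : finType) m n (A : I -> 'M[R]_m) (B : I -> 'M[R]_n) :
  (0 < m)%N -> (0 < n)%N ->
  (forall i, (A i)^T = A i) -> (forall i, (B i)^T = B i) ->
  (forall i, 0 <= lambda_min (A i)) -> (forall i, 0 <= lambda_min (B i)) ->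
  \sum_i lambda_min (A i) * lambda_min (B i) <= lambda_min (\sum_i A i *t B i) /\
  lambda_max (\sum_i A i *t B i) <= \sum_i lambda_max (A i) * lambda_max (B i).
Proof.
move=> m0 n0 sA sB A0 B0; apply: lambda_bounds_of_qform.
- by rewrite muln_gt0 m0.
- exact: tens_sum_sym.
move=> v; rewrite qform_sum !mulr_suml.
by apply/andP; split; apply: ler_sum => i _;
  case/andP: (qform_tens_bounds v (sA i) (sB i) (A0 i) (B0 i)).
Qed.

Lemma sqrt_psd_spec n (S : 'M[R]_n) : psdmx S ->
  (sqrt_psd S)^T = sqrt_psd S /\ sqrt_psd S *m sqrt_psd S = S.
Proof.
move=> [sS Spsd]; suff [[]] : psdmx (sqrt_psd S) /\ sqrt_psd S *m sqrt_psd S = S by [].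
rewrite /sqrt_psd; apply: (epsilon_spec _ (fun T => psdmx T /\ T *m T = S)).
have [Q [D dS]] := sym_orthodiag sS; have [QQT ES] := dS.
have D0 i : 0 <= D 0 i.
  have [v v0 Sv] := eigs_qform (orthodiag_eigs i dS).
  by have := Spsd v; rewrite -/(qform S v) Sv pmulr_lge0 // sqnorm_gt0.
pose E := \row_j Num.sqrt (D 0 j).
exists (Q^T *m diag_mx E *m Q); split; first split.
- by rewrite !trmx_mul trmxK tr_diag_mx mulmxA.
- move=> v; have := @qform_orthodiag_bounds _ _ Q (diag_mx E) 0 (\sum_j E 0 j) v QQT.
  case/(_ _ _)/andP => [i j ij | i |]; first by rewrite mxE (negbTE ij) mulr0n.
    rewrite mxE eqxx mulr1n mxE sqrtr_ge0 (bigD1 i) //= mxE lerDl.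
    by apply: sumr_ge0 => j _; rewrite mxE sqrtr_ge0.
  by rewrite mul0r => ? _.
- rewrite !mulmxA -(mulmxA _ Q) QQT mulmx1 -(mulmxA Q^T) mulmx_diag ES.
  by congr (_ *m diag_mx _ *m _); apply/rowP => j; rewrite !mxE -expr2 sqr_sqrtr.
Qed.

Lemma qform_sandwich_bounds n (S C : 'M[R]_n) v : (0 < n)%N -> S^T = S -> C^T = C ->
  0 <= lambda_min C ->
  lambda_min C * lambda_min (S *m S) * sqnorm v <= qform (S *m C *m S) v
    <= lambda_max C * lambda_max (S *m S) * sqnorm v.
Proof.
move=> n0 sS sC C0; have sSS : (S *m S)^T = S *m S by rewrite trmx_mul sS.
have C0' : 0 <= lambda_max C := le_trans C0 (lambda_min_le_max n0 sC).
rewrite qform_sandwich //; have /andP[lo hi] := rayleigh_bounds (v *m S) sC.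
have /andP[lo' hi'] := rayleigh_bounds v sSS.
rewrite (sqnorm_mul_sqrt v sS erefl) in lo hi.
by rewrite -!mulrA; apply/andP; split;
  [apply: le_trans lo; apply: ler_wpM2l | apply: le_trans hi _; apply: ler_wpM2l].
Qed.

Lemma weighted_mean_le_bigmax (I : finType) (w c : I -> R) : (forall i, 0 <= w i) ->
  \sum_i w i / (\sum_j w j) * c i <= \big[Num.max/0]_i c i.
Proof.
move=> w0; have [->|sw0] := eqVneq (\sum_j w j) 0.
  rewrite big1 => [|i _]; last by rewrite invr0 mulr0 mul0r.
  exact: bigmax_ge_id.
apply: le_trans (_ : \sum_i w i / (\sum_j w j) * \big[Num.max/0]_i c i <= _).
  apply: ler_sum => i _; apply: ler_wpM2l; last exact: le_bigmax.
  by rewrite divr_ge0 // sumr_ge0.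
by rewrite -mulr_suml -mulr_suml mulfV // mul1r.
Qed.

End EigenvalueBounds.

Section SingularValues.
Variable R : rcfType.

Lemma sigma_min_sqr p q (A : 'M[R]_(p, q)) : (0 < p)%N -> (p <= q)%N ->
  sigma_min A ^+ 2 = lambda_min (A *m A^T).
Proof. by move=> p0 pq; rewrite /sigma_min pq sqr_sqrtr // lambda_min_gram_ge0. Qed.

Lemma sigma_max_sqr p q (A : 'M[R]_(p, q)) : (0 < p)%N -> (p <= q)%N ->
  sigma_max A ^+ 2 = lambda_max (A *m A^T).
Proof.
move=> p0 pq; rewrite /sigma_max pq sqr_sqrtr //.
apply: le_trans (lambda_min_gram_ge0 A p0) (lambda_min_le_max p0 _).
by rewrite trmx_mul trmxK.
Qed.

Lemma kappa_mx_sqr p q (A : 'M[R]_(p, q)) : (0 < p)%N -> (p <= q)%N ->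
  kappa_mx A ^+ 2 = lambda_max (A *m A^T) / lambda_min (A *m A^T).
Proof. by move=> p0 pq; rewrite /kappa_mx expr_div_n sigma_max_sqr ?sigma_min_sqr. Qed.

End SingularValues.

Section LinearNetwork.
Variables (R : rcfType) (d k m L : nat).
Local Notation a := (width d k m L).
Variable W : forall l : nat, 'M[R]_(a l.+1, a l).
Hypotheses (d_gt0 : (0 < d)%N) (k_gt0 : (0 < k)%N) (dk_lt_m : (maxn d k < m)%N).

Local Notation Atop l := (Wtop W l *m (Wtop W l)^T).
Local Notation Cbot l := ((Wbot W l)^T *m Wbot W l).

Lemma k_le_width (l : 'I_L) : (k <= a l.+1)%N.
Proof.
by rewrite /width /=; case: ifP => // _; rewrite ltnW // (leq_ltn_trans (leq_maxr d k)).
Qed.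

Lemma d_le_width (l : 'I_L) : (d <= a l)%N.
Proof.
rewrite /width; case: ifP => // _; rewrite ifN ?neq_ltn ?ltn_ord //.
by rewrite ltnW // (leq_ltn_trans (leq_maxl d k)).
Qed.

Lemma alphaE (l : 'I_L) : alpha W l = lambda_min (Atop l) * lambda_min (Cbot l).
Proof. by rewrite /alpha !sigma_min_sqr ?trmxK ?k_le_width ?d_le_width. Qed.

Lemma kappa_alphaE (l : 'I_L) : 0 < alpha W l ->
  kappa_mx (Wtop W l) ^+ 2 * kappa_mx (Wbot W l)^T ^+ 2 * alpha W l
    = lambda_max (Atop l) * lambda_max (Cbot l).
Proof.
rewrite alphaE !kappa_mx_sqr ?trmxK ?k_le_width ?d_le_width // => al_gt0.
have [A0 C0] : lambda_min (Atop l) != 0 /\ lambda_min (Cbot l) != 0.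
  by apply/andP; rewrite -negb_or -mulf_eq0 gt_eqF.
by field; rewrite A0 C0.
Qed.

Lemma GO_sym (Sigma : 'M[R]_d) : psdmx Sigma -> (GO W Sigma)^T = GO W Sigma.
Proof.
move=> /sqrt_psd_spec [sS _]; apply: tens_sum_sym => l; rewrite !trmx_mul ?trmxK //.
by rewrite sS !mulmxA.
Qed.

Lemma GO_lambda_bounds (Sigma : 'M[R]_d) : posdefmx Sigma ->
  lambda_min Sigma * \sum_l alpha W l <= lambda_min (GO W Sigma) /\
  lambda_max (GO W Sigma)
    <= lambda_max Sigma * \sum_l lambda_max (Atop l) * lambda_max (Cbot l).
Proof.
move=> Spd; have [sS SS] := sqrt_psd_spec (posdefmx_psd Spd).
set S := sqrt_psd Sigma in sS SS *.
have sA l : (Atop l)^T = Atop l by rewrite trmx_mul trmxK.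
have sC l : (Cbot l)^T = Cbot l by rewrite trmx_mul trmxK.
have sB l : (S *m Cbot l *m S)^T = S *m Cbot l *m S by rewrite !trmx_mul trmxK sS !mulmxA.
have A0 l : 0 <= lambda_min (Atop l) := lambda_min_gram_ge0 _ k_gt0.
have A0' l : 0 <= lambda_max (Atop l) := le_trans (A0 l) (lambda_min_le_max k_gt0 (sA l)).
have C0 l : 0 <= lambda_min (Cbot l) by rewrite -{2}[Wbot W l]trmxK lambda_min_gram_ge0.
have Bbd l : lambda_min (Cbot l) * lambda_min Sigma <= lambda_min (S *m Cbot l *m S)
    /\ lambda_max (S *m Cbot l *m S) <= lambda_max (Cbot l) * lambda_max Sigma.
  by apply: lambda_bounds_of_qform => // v; rewrite -SS qform_sandwich_bounds.
have Blo l := (Bbd l).1; have Bhi l := (Bbd l).2.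
have B0 l : 0 <= lambda_min (S *m Cbot l *m S).
  by apply: le_trans (Blo l); rewrite mulr_ge0 // ltW // lambda_min_gt0.
have [lo hi] := tens_sum_lambda_bounds k_gt0 d_gt0 sA sB A0 B0.
split; [apply: le_trans lo | apply: le_trans hi _]; rewrite mulr_sumr;
  apply: ler_sum => l _.
  by rewrite alphaE mulrCA; apply: ler_wpM2l; rewrite // mulrC Blo.
by rewrite mulrCA; apply: ler_wpM2l; rewrite // mulrC Bhi.
Qed.

End LinearNetwork.

Unset Implicit Arguments.

Theorem mainTheorem2 (R : rcfType) (L d k m : nat)
  (W : forall l : nat, 'M[R]_(width d k m L l.+1, width d k m L l))
  (Sigma : 'M[R]_d) :
  (1 <= L)%N -> (0 < d)%N -> (0 < k)%N -> (maxn d k < m)%N ->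
  posdefmx Sigma ->
  (forall l : 'I_L, 0 < alpha W l) ->
  let G := GO W Sigma in
  let gamma := fun l : 'I_L => alpha W l / \sum_(i < L) alpha W i in
  let c := fun l : 'I_L =>
     kappa_mx (Wtop W l) ^+ 2 * kappa_mx (Wbot W l)^T ^+ 2 in
  posdefmx G /\
  kappa_sym G <= kappa_sym Sigma * \sum_(l < L) gamma l * c l /\
  kappa_sym Sigma * \sum_(l < L) gamma l * c l
    <= kappa_sym Sigma * \big[Num.max/0]_(l < L) c l.
Proof.
move=> L_gt0 d_gt0 k_gt0 dk_lt_m Spd alpha_gt0 G gamma c.
have [lminG lmaxG] := GO_lambda_bounds W d_gt0 k_gt0 dk_lt_m Spd.
have lminS := lambda_min_gt0 d_gt0 Spd.
have kappaS_ge0 : 0 <= kappa_sym Sigma.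
  by rewrite divr_ge0 ?ltW // (lt_le_trans lminS) // lambda_min_le_max // Spd.1.
have sum_alpha_gt0 : 0 < \sum_l alpha W l.
  by rewrite (bigD1 (Ordinal L_gt0)) //= ltr_wpDr ?sumr_ge0 // => l _; rewrite ltW.
have lminG_gt0 : 0 < lambda_min G by apply: lt_le_trans lminG; rewrite mulr_gt0.
set beta := \sum_l _ in lmaxG.
have mean_c : \sum_l gamma l * c l = beta / \sum_l alpha W l.
  rewrite /beta mulr_suml; apply: eq_bigr => l _.
  by rewrite -kappa_alphaE // /gamma /c [LHS]mulrC mulrA.
have sG : G^T = G := GO_sym W (posdefmx_psd Spd).
split; [|split].
- exact: posdefmx_lambda_min sG lminG_gt0.
- rewrite mean_c /kappa_sym mulrACA -invfM; apply: ler_pM => //.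
  + by apply: le_trans (ltW lminG_gt0) (lambda_min_le_max _ sG); rewrite muln_gt0 k_gt0.
  + by rewrite invr_ge0 ltW.
  + by rewrite lef_pV2 ?posrE // mulr_gt0.
- by apply: ler_wpM2l => //; apply: weighted_mean_le_bigmax => l; rewrite ltW.
Qed.
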